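(* Let $\mathbb{F}_q$ be a finite field and $\chi$ its canonical additive character. The eigenvalues (listed with multiplicity) of the adjacency matrix of the special unit-graph on $\operatorname{Mat}_2(\mathbb{F}_q)$ are: $\lambda = q^3 - q$ with multiplicity $1$; $\mu_0 = -q$ with multiplicity $q^3+q^2-q-1$; and, for each $\delta \in \mathbb{F}_q^{\ast}$, $\mu_\delta = q\sum_{\alpha \in \mathbb{F}_q^{\ast}} \chi(\alpha + \delta\alpha^{-1})$ with multiplicity $q^3 - q$.
   Context: The special unit-graph on $\operatorname{Mat}_2(\mathbb{F}_q)$ is the Cayley graph $\operatorname{Cay}(\operatorname{Mat}_2(\mathbb{F}_q), \operatorname{SL}_2(\mathbb{F}_q))$: vertex set $\operatorname{Mat}_2(\mathbb{F}_q)$, with $A$ adjacent to $B$ iff $\det(B-A)=1$ (this relation is symmetric for $2\times 2$ matrices). The canonical additive character of $\mathbb{F}_q$, where $q=p^m$ with $p$ prime, is $\chi(x) = \exp(2\pi i \operatorname{Tr}_{\mathbb{F}_q/\mathbb{F}_p}(x)/p)$. *)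

From HB Require Import structures.
From mathcomp Require Import all_boot all_order all_algebra all_field.
From mathcomp Require Import complex.
From mathcomp Require Import reals trigo.
Set Implicit Arguments. Unset Strict Implicit. Unset Printing Implicit Defensive.
Import Order.TTheory GRing.Theory Num.Theory.
Local Open Scope ring_scope.

Definition fchar (F : finFieldType) : nat := pdiv #|F|.
Definition fdeg (F : finFieldType) : nat := logn (fchar F) #|F|.

Definition abs_trace (F : finFieldType) (x : F) : F :=
  \sum_(i < fdeg F) x ^+ (fchar F ^ i).

(* The integer representative in {0,...,p-1} of an element of the prime
   subfield of F (0 if there is none, which never happens for traces). *)
Definition prime_field_rep (F : finFieldType) (t : F) : nat :=
  if [pick k : 'I_(fchar F) | (k%:R : F) == t] is Some k then val k else 0%N.

(* Canonical additive character chi(x) = exp(2 pi i Tr(x) / p), with values in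
   the complex numbers R[i] over a real field R; exp(i theta) = cos theta + i sin theta. *)
Definition can_add_char (R : realType) (F : finFieldType) (x : F) : R[i] :=
  let theta := (2 * pi * (prime_field_rep (abs_trace x))%:R / (fchar F)%:R : R) in
  Complex (cos theta) (sin theta).

Definition special_unit_adj (F : finFieldType) (A B : 'M[F]_2) : bool :=
  \det (B - A) == 1.

Definition special_unit_adjmx (R : realType) (F : finFieldType) :
    'M[R[i]]_(#|{: 'M[F]_2}|) :=
  \matrix_(i, j) (if special_unit_adj (enum_val i) (enum_val j) then 1 else 0).

Definition mu_delta (R : realType) (F : finFieldType) (d : F) : R[i] :=
  (#|F|)%:R * \sum_(a : F | a != 0) can_add_char R (a + d * a^-1).

(* The special unit-graph is the Cayley graph of the additive group of [Mat_2(F_q)] with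
   connection set [SL_2(F_q)]. For a finite abelian group, the characters
   [x |-> chi (tr (B x^T))], [B] in [Mat_2(F_q)], are simultaneous eigenvectors of the
   adjacency matrix, with eigenvalue [lambda(B) = sum_(s in SL_2) chi (tr (B s^T))], and by
   orthogonality they form an invertible matrix. Since [lambda(g B) = lambda(B)] for [g] in
   [SL_2], it remains to evaluate [lambda] at [0] (giving [|SL_2| = q^3 - q]), at a singular
   [B] moved to a matrix with a single nonzero row (giving [-q]), and at [diag(1, delta)]
   (giving [mu_delta]), and to count the matrices of each determinant. *)

From mathcomp Require Import all_boot all_algebra all_field.
From mathcomp Require Import complex reals trigo.
From mathcomp Require Import ring lra.

Set Implicit Arguments. Unset Strict Implicit. Unset Printing Implicit Defensive.
Import GRing.Theory Num.Theory.
Local Open Scope ring_scope.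

Section PrimeField.
Variable F : finFieldType.
Local Notation p := (fchar F).
Local Notation m := (fdeg F).

Lemma fchar_spec : [/\ prime p, p \in [pchar F] & #|F| = (p ^ m)%N].
Proof.
have [r r_pr r_char] := finPcharP F.
have cardF : #|F| = (r ^ logn r #|F|)%N := card_pprimeChar r_char.
have logn_gt0 : (0 < logn r #|F|)%N.
  by rewrite -(ltn_exp2l _ _ (prime_gt1 r_pr)) -cardF finNzRing_gt1.
have p_r : p = r by rewrite /fchar cardF -(prednK logn_gt0) pdiv_pfactor.
by rewrite /fdeg p_r.
Qed.

Lemma fchar_prime : prime p. Proof. by case: fchar_spec. Qed.
Lemma fchar_pchar : p \in [pchar F]. Proof. by case: fchar_spec. Qed.
Lemma card_fchar : #|F| = (p ^ m)%N. Proof. by case: fchar_spec. Qed.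

Lemma fdeg_gt0 : (0 < m)%N.
Proof. by rewrite -(ltn_exp2l _ _ (prime_gt1 fchar_prime)) -card_fchar finNzRing_gt1. Qed.

Lemma natr_fchar_inj (a b : nat) :
  (a < p)%N -> (b < p)%N -> (a%:R : F) = b%:R -> a = b.
Proof.
wlog ab : a b / (a <= b)%N.
  by move=> H ha hb e; case: (leqP a b) => [|/ltnW] ?; [apply: H | apply/esym/H].
move=> _ hb e; have lt_ba : (b - a < p)%N by apply: leq_ltn_trans (leq_subr a b) hb.
have : (p %| b - a)%N by rewrite (dvdn_pcharf fchar_pchar) natrB // e subrr.
by rewrite /dvdn modn_small // subn_eq0 => ba; apply/eqP; rewrite eqn_leq ab.
Qed.

(* The [p] values [k%:R], [k < p], are distinct roots of ['X^p - 'X], which has no others. *)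
Lemma frobenius_fixed_natr (t : F) : t ^+ p = t -> exists2 k, (k < p)%N & k%:R = t.
Proof.
move=> tp; have [k /eqP kt | t_new] := pickP (fun k : 'I_p => (k%:R : F) == t).
  by exists k.
exfalso; pose rs := t :: [seq (val k)%:R | k <- enum 'I_p].
have sizeXpX : size ('X^p - 'X : {poly F}) = p.+1.
  by rewrite size_polyDl ?size_polyXn // size_polyN size_polyX ltnS prime_gt1 ?fchar_prime.
have nz : ('X^p - 'X : {poly F}) != 0 by rewrite -size_poly_eq0 sizeXpX.
have rs_roots : all (root ('X^p - 'X)) rs.
  apply/allP => x /predU1P[-> | /mapP[k _ ->]]; rewrite rootE !hornerE ?tp ?subrr //.
  by rewrite -(pFrobenius_autE fchar_pchar) pFrobenius_aut_nat subrr.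
have uniq_rs : uniq rs.
  rewrite /= map_inj_uniq ?enum_uniq ?andbT => [|i j /natr_fchar_inj eq_ij].
    by apply/mapP => -[k _ e]; have := t_new k; rewrite -e eqxx.
  exact/val_inj/eq_ij.
by have := max_poly_roots nz rs_roots uniq_rs; rewrite sizeXpX /= size_map size_enum_ord ltnn.
Qed.

Lemma prime_field_repP (t : F) :
  t ^+ p = t -> (prime_field_rep t < p)%N /\ (prime_field_rep t)%:R = t.
Proof.
case/frobenius_fixed_natr=> k0 lt_k0p k0t; rewrite /prime_field_rep.
case: pickP => [k /eqP -> | /(_ (Ordinal lt_k0p))]; first by rewrite ltn_ord.
by rewrite /= k0t eqxx.
Qed.

Lemma prime_field_rep_natr (k : nat) : prime_field_rep (k%:R : F) = (k %% p)%N.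
Proof.
have kp : (k%:R : F) ^+ p = k%:R.
  by rewrite -(pFrobenius_autE fchar_pchar) pFrobenius_aut_nat.
have [lt_rp rk] := prime_field_repP kp; apply: natr_fchar_inj => //.
  by rewrite ltn_mod prime_gt0 ?fchar_prime.
by rewrite rk {1}(divn_eq k p) natrD natrM (pcharf0 fchar_pchar) mulr0 add0r.
Qed.

Lemma abs_traceD (x y : F) : abs_trace (x + y) = abs_trace x + abs_trace y.
Proof.
rewrite /abs_trace -big_split; apply: eq_bigr => i _.
by rewrite exprDn_pchar // pnatX pnatE ?fchar_prime ?fchar_pchar.
Qed.

Lemma abs_trace0 : abs_trace (0 : F) = 0.
Proof. by apply: (addIr (abs_trace 0)); rewrite -abs_traceD !add0r. Qed.

Lemma abs_trace_frobenius (x : F) : abs_trace x ^+ p = abs_trace x.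
Proof.
rewrite /abs_trace -(pFrobenius_autE fchar_pchar) rmorph_sum /=.
under eq_bigr => i _ do rewrite pFrobenius_autE -exprM -expnSr.
have [k mk] : exists k, m = k.+1 by exists m.-1; rewrite prednK ?fdeg_gt0.
rewrite mk big_ord_recr big_ord_recl /= -mk -card_fchar expf_card addrC.
by congr (_ + _); apply: eq_bigr => i _.
Qed.

Lemma abs_trace_natr (x : F) : abs_trace x = (prime_field_rep (abs_trace x))%:R.
Proof. by have [_ ->] := prime_field_repP (abs_trace_frobenius x). Qed.

(* [abs_trace] is a polynomial map of degree [p ^ (m - 1) < #|F|], so it is not identically 0. *)
Lemma abs_trace_neq0 : exists x : F, abs_trace x != 0.
Proof.
apply/existsP; apply: contraTT isT => /existsPn trace0.
have p_gt1 := prime_gt1 fchar_prime.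
have [k mk] : exists k, m = k.+1 by exists m.-1; rewrite prednK ?fdeg_gt0.
pose T : {poly F} := \sum_(i < m) 'X^(p ^ i).
have T_nz : T != 0.
  apply/eqP => /(congr1 (fun P : {poly F} => P`_(p ^ k))).
  rewrite coef0 coef_sum mk (bigD1 ord_max) //= coefXn eqxx big1 ?addr0.
    by move/eqP; rewrite oner_eq0.
  move=> i ne_imax; rewrite coefXn; case: eqP => // /(expnI p_gt1) eq_ik.
  by move: ne_imax; rewrite -val_eqE /= -eq_ik eqxx.
have sizeT : (size T <= (p ^ k).+1)%N.
  apply: leq_trans (size_sum _ _ _) _; apply/bigmax_leqP => i _.
  by rewrite size_polyXn ltnS leq_exp2l // -ltnS -mk ltn_ord.
have T_roots : all (root T) (enum F).
  apply/allP => x _; rewrite rootE horner_sum.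
  by under eq_bigr do rewrite hornerXn; rewrite -[_ == _]negbK trace0.
have := max_poly_roots T_nz T_roots (enum_uniq _).
rewrite -cardE card_fchar mk => /leq_trans /(_ sizeT).
by rewrite ltnS leq_exp2l // ltnn.
Qed.

End PrimeField.

Section CharacterSum.
Variables (V : finZmodType) (K : idomainType) (psi : V -> K).
Hypothesis psiD : {morph psi : x y / x + y >-> x * y}.

Lemma sum_char_eq0 : (exists v, psi v != 1) -> \sum_x psi x = 0.
Proof.
case=> v psi_v; have shift : \sum_x psi x = psi v * \sum_x psi x.
  by rewrite {1}(reindex_inj (addrI v)) /= mulr_sumr; apply: eq_bigr => x _; rewrite psiD.
apply/eqP; move/eqP: shift; rewrite -subr_eq0 -[X in X - _]mul1r -mulrBl mulf_eq0.
by rewrite subr_eq0 eq_sym (negbTE psi_v).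
Qed.

End CharacterSum.

Section CanonicalCharacter.
Variables (R : realType) (F : finFieldType).
Local Notation p := (fchar F).
Local Notation chi := (can_add_char R (F:=F)).

Definition zeta (k : nat) : R[i] :=
  let theta := (2 * pi * k%:R / p%:R : R) in Complex (cos theta) (sin theta).

Lemma zetaD a b : zeta (a + b)%N = zeta a * zeta b.
Proof.
have angle : 2 * pi * (a + b)%N%:R / p%:R = 2 * pi * a%:R / p%:R + 2 * pi * b%:R / p%:R :> R.
  by rewrite natrD; ring.
by rewrite /zeta angle cosD sinD; congr Complex; rewrite addrC.
Qed.

Lemma zeta_modp k : zeta (k %% p) = zeta k.
Proof.
have p_neq0 : (p%:R : R) != 0 by rewrite pnatr_eq0 -lt0n prime_gt0 ?fchar_prime.
have angle : 2 * pi * k%:R / p%:R = 2 * pi * (k %% p)%:R / p%:R + (pi *+ 2) *+ (k %/ p) :> R.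
  by rewrite {1}(divn_eq k p) natrD natrM -mulr_natr mulr2n; field.
by rewrite /zeta angle (periodicn (@cosD2pi R)) (periodicn (@sinD2pi R)).
Qed.

(* With [a := pi k / p] in [(0, pi)]: [cos (2 a) = 1 - 2 (sin a)^2 < 1]. *)
Lemma zeta_neq1 k : (0 < k < p)%N -> zeta k != 1.
Proof.
case/andP=> k_gt0 lt_kp; apply/eqP => -[cos1 _].
have p_gt0 : (0 : R) < p%:R by rewrite ltr0n prime_gt0 ?fchar_prime.
set a : R := pi * k%:R / p%:R.
have a_bounds : 0 < a < pi.
  rewrite /a divr_gt0 ?mulr_gt0 ?pi_gt0 ?p_gt0 ?ltr0n //=.
  by rewrite ltr_pdivrMr // ltr_pM2l ?pi_gt0 // ltr_nat.
have sin_a := sin_gt0_pi a_bounds.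
move: cos1; rewrite (_ : 2 * pi * k%:R / p%:R = a + a); last by rewrite /a; ring.
by rewrite cosD -!expr2 cos2sin2; nra.
Qed.

Lemma can_add_charE (x : F) : chi x = zeta (prime_field_rep (abs_trace x)).
Proof. by []. Qed.

Lemma can_add_charD (x y : F) : chi (x + y) = chi x * chi y.
Proof.
rewrite !can_add_charE -zetaD -[RHS]zeta_modp abs_traceD; congr zeta.
rewrite {1}[abs_trace x]abs_trace_natr {1}[abs_trace y]abs_trace_natr.
by rewrite -natrD prime_field_rep_natr.
Qed.

Lemma can_add_char0 : chi 0 = 1.
Proof.
rewrite can_add_charE abs_trace0 -(mulr0n 1) prime_field_rep_natr mod0n.
by rewrite /zeta mulr0 mul0r cos0 sin0.
Qed.

Lemma can_add_char_nontrivial : exists x : F, chi x != 1.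
Proof.
have [x tr_x] := abs_trace_neq0 F; exists x; rewrite can_add_charE.
have [lt_rp rep_x] := prime_field_repP (abs_trace_frobenius x).
apply: zeta_neq1; rewrite lt_rp andbT lt0n; apply: contra tr_x => /eqP rep0.
by rewrite -rep_x rep0.
Qed.

Lemma sum_can_add_char_mul (u : F) :
  \sum_x chi (u * x) = if u == 0 then #|F|%:R else 0.
Proof.
have [-> | u_neq0] := eqVneq u 0.
  by under eq_bigr do rewrite mul0r can_add_char0; rewrite sumr_const.
transitivity (\sum_x chi x); first by rewrite [RHS](reindex_inj (mulfI u_neq0)).
exact: sum_char_eq0 can_add_charD can_add_char_nontrivial.
Qed.

End CanonicalCharacter.

Lemma similar_char_poly (K : fieldType) n (A P D : 'M[K]_n) :
  P \in unitmx -> A *m P = P *m D -> char_poly A = char_poly D.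
Proof.
rewrite unitmxE unitfE => detP_neq0 AP; pose Pp := map_mx polyC P.
have intertwine : char_poly_mx A *m Pp = Pp *m char_poly_mx D.
  by rewrite mulmxBl mulmxBr -map_mxM AP map_mxM scalar_mxC.
have detPp_neq0 : (\det P)%:P != 0 :> {poly K} by rewrite polyC_eq0.
move: (congr1 determinant intertwine); rewrite !det_mulmx det_map_mx mulrC.
exact: (mulfI detPp_neq0).
Qed.

Definition cayley_adjmx (K : nzRingType) (V : finZmodType) (S : pred V) :
    'M[K]_#|{: V}| :=
  \matrix_(i, j) (if S (enum_val j - enum_val i) then 1 else 0).

Section CayleySpectrum.
Variables (K : fieldType) (V : finZmodType) (S : pred V) (psi : V -> V -> K).
Hypothesis psiD : forall b, {morph psi b : x y / x + y >-> x * y}.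
Hypothesis psi0 : forall b, psi b 0 = 1.
Hypothesis sum_psi_eq0 : forall x, x != 0 -> \sum_b psi b x = 0.
Hypothesis card_neq0 : (#|V|%:R : K) != 0.

Local Notation N := #|{: V}|.

Definition cayley_eigenmx : 'M[K]_N := \matrix_(x, b) psi (enum_val b) (enum_val x).

Definition cayley_eigenvalue (b : V) : K := \sum_(s | S s) psi b s.

Lemma cayley_adjmx_eigenmx :
  cayley_adjmx K S *m cayley_eigenmx =
  cayley_eigenmx *m diag_mx (\row_b cayley_eigenvalue (enum_val b)).
Proof.
apply/matrixP => x b; rewrite mul_mx_diag !mxE.
under eq_bigr do rewrite !mxE.
rewrite -(big_enum_val (fun y => (if S (y - enum_val x) then 1 else 0) * psi (enum_val b) y)).
rewrite (reindex_inj (addrI (enum_val x))) /= mulr_sumr [RHS]big_mkcond.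
apply: eq_bigr => s _; rewrite [enum_val x + s]addrC addrK psiD.
by case: (S s); rewrite ?mul1r ?mul0r // mulrC.
Qed.

Lemma cayley_eigenmx_unit : cayley_eigenmx \in unitmx.
Proof.
pose E' : 'M[K]_N := \matrix_(b, y) (#|V|%:R^-1 * psi (enum_val b) (- enum_val y)).
suff /mulmx1_unit[] : cayley_eigenmx *m E' = 1%:M by [].
apply/matrixP => x y; rewrite !mxE.
under eq_bigr do rewrite !mxE mulrCA -psiD.
rewrite -mulr_sumr -(big_enum_val (fun b => psi b (enum_val x - enum_val y))).
have [<- | ne_xy] := eqVneq x y.
  by under eq_bigr do rewrite subrr psi0; rewrite sumr_const mulVf.
by rewrite sum_psi_eq0 ?mulr0 // subr_eq0 (inj_eq enum_val_inj).
Qed.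

Lemma char_poly_cayley_adjmx :
  char_poly (cayley_adjmx K S) = \prod_b ('X - (cayley_eigenvalue b)%:P).
Proof.
rewrite (similar_char_poly cayley_eigenmx_unit cayley_adjmx_eigenmx).
rewrite char_poly_trig ?diag_mx_is_trig //.
transitivity (\prod_(i < N) ('X - (cayley_eigenvalue (enum_val i))%:P)).
  by apply: eq_bigr => i _; rewrite !mxE eqxx mulr1n.
by rewrite -(big_enum_val (fun b => 'X - (cayley_eigenvalue b)%:P)).
Qed.

End CayleySpectrum.

Definition mxpair (R : comNzRingType) n (B A : 'M[R]_n) : R := \tr (B *m A^T).

Section TracePairing.
Variables (R : comNzRingType) (n : nat).
Implicit Types A B g : 'M[R]_n.

Lemma mxpairE B A : mxpair B A = \sum_i \sum_j B i j * A i j.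
Proof. by apply: eq_bigr => i _; rewrite !mxE; apply: eq_bigr => j _; rewrite mxE. Qed.

Lemma mxpairC B A : mxpair B A = mxpair A B.
Proof. by rewrite /mxpair -mxtrace_tr trmx_mul trmxK. Qed.

Lemma mxpairDr B A1 A2 : mxpair B (A1 + A2) = mxpair B A1 + mxpair B A2.
Proof. by rewrite /mxpair linearD mulmxDr mxtraceD. Qed.

Lemma mxpair0r B : mxpair B 0 = 0.
Proof. by rewrite /mxpair trmx0 mulmx0 mxtrace0. Qed.

Lemma mxpair0l A : mxpair 0 A = 0.
Proof. by rewrite mxpairC mxpair0r. Qed.

Lemma mxpairZl a B A : mxpair (a *: B) A = a * mxpair B A.
Proof. by rewrite /mxpair -scalemxAl mxtraceZ. Qed.

Lemma mxpair_deltal i j A : mxpair (delta_mx i j) A = A i j.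
Proof.
rewrite mxpairE (bigD1 i) //= (bigD1 j) //= !mxE !eqxx mul1r.
rewrite big1 => [|k /negbTE k_j]; last by rewrite mxE k_j andbF mul0r.
rewrite addr0 big1 ?addr0 // => k /negbTE k_i.
by rewrite big1 // => l _; rewrite mxE k_i mul0r.
Qed.

Lemma mxpair_mull g B A : mxpair (g *m B) A = mxpair B (g^T *m A).
Proof. by rewrite /mxpair -mulmxA mxtrace_mulC trmx_mul trmxK mulmxA. Qed.

End TracePairing.

Section MatrixCharacter.
Variables (R : realType) (F : finFieldType).
Local Notation chi := (can_add_char R (F:=F)).

Lemma sum_can_add_char_mxpair n (z : 'M[F]_n) :
  z != 0 -> \sum_B chi (mxpair B z) = 0.
Proof.
move=> z_neq0; have [[i j] /= z_ij] : exists ij, z ij.1 ij.2 != 0.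
  apply/existsP; apply: contraNT z_neq0 => /existsPn z0.
  by apply/eqP/matrixP => i j; apply/eqP; have := z0 (i, j); rewrite negbK mxE.
apply: sum_char_eq0 => [B1 B2|]; first by rewrite !(mxpairC _ z) mxpairDr can_add_charD.
have [t chi_t] := can_add_char_nontrivial R F.
by exists ((t / z i j) *: delta_mx i j); rewrite mxpairZl mxpair_deltal divfK.
Qed.

End MatrixCharacter.

Lemma sum_if_pred1 (I : finType) (M : nmodType) (P : pred I) (i0 : I) (h : I -> M) :
  P =1 pred1 i0 -> \sum_i (if P i then h i else 0) = h i0.
Proof. by move=> P_i0; rewrite -big_mkcond (eq_bigl _ _ P_i0) big_pred1_eq. Qed.

Section TwoByTwo.
Variable F : finFieldType.
Local Notation q := #|F|.

Definition mx22 (a b c d : F) : 'M[F]_2 :=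
  \matrix_(i, j) if i == 0 then (if j == 0 then a else b) else (if j == 0 then c else d).

Lemma ord2P (i : 'I_2) : i = 0 \/ i = 1.
Proof. by case: i => [[|[|//]]] lt_i2; [left | right]; apply: val_inj. Qed.

Lemma mx22_eta (A : 'M[F]_2) : A = mx22 (A 0 0) (A 0 1) (A 1 0) (A 1 1).
Proof. by apply/matrixP => i j; rewrite mxE; case: (ord2P i) => ->; case: (ord2P j) => ->. Qed.

Lemma mx22_1 : mx22 1 0 0 1 = 1%:M.
Proof. by apply/matrixP => i j; rewrite !mxE; case: (ord2P i) => ->; case: (ord2P j) => ->. Qed.

Lemma mx22_eq0 a b c d : (mx22 a b c d == 0) = [&& a == 0, b == 0, c == 0 & d == 0].
Proof.
apply/eqP/and4P => [/matrixP A0 | [/eqP-> /eqP-> /eqP-> /eqP->]].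
  by split; apply/eqP; [move: (A0 0 0) | move: (A0 0 1) | move: (A0 1 0) | move: (A0 1 1)];
    rewrite !mxE.
by apply/matrixP => i j; rewrite !mxE; do 2!case: ifP.
Qed.

Lemma det_mx22 a b c d : \det (mx22 a b c d) = a * d - b * c.
Proof.
rewrite (expand_det_row _ 0) !big_ord_recl big_ord0 addr0 /cofactor !det_mx11 !mxE /=.
by rewrite /bump /= expr0 expr1 mul1r mulN1r mulrN.
Qed.

Lemma mul_mx22 a b c d a' b' c' d' :
  mx22 a b c d *m mx22 a' b' c' d' =
  mx22 (a * a' + b * c') (a * b' + b * d') (c * a' + d * c') (c * b' + d * d').
Proof.
apply/matrixP => i j; rewrite !mxE !big_ord_recl big_ord0 addr0 !mxE /=.
by case: (ord2P i) => ->; case: (ord2P j) => ->.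
Qed.

Lemma mxpair_mx22 x y z w a b c d :
  mxpair (mx22 x y z w) (mx22 a b c d) = x * a + y * b + z * c + w * d.
Proof. by rewrite mxpairE !big_ord_recl !big_ord0 !mxE /= !addr0 addrA. Qed.

Lemma sum_mx22 (M : nmodType) (f : 'M[F]_2 -> M) :
  \sum_A f A = \sum_a \sum_b \sum_c \sum_d f (mx22 a b c d).
Proof.
pose h (t : (F * F) * (F * F)) := mx22 t.1.1 t.1.2 t.2.1 t.2.2.
have h_bij : bijective h.
  exists (fun A : 'M[F]_2 => ((A 0 0, A 0 1), (A 1 0, A 1 1))) => [[[a b] [c d]]|A].
    by rewrite /h !mxE.
  by rewrite /h /= -mx22_eta.
rewrite (reindex h) /=; last exact: onW_bij.
rewrite -(pair_big xpredT xpredT (fun ab cd => f (h (ab, cd)))) /=.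
rewrite -(pair_big xpredT xpredT (fun a b => \sum_(cd : F * F) f (h ((a, b), cd)))) /=.
apply: eq_bigr => a _; apply: eq_bigr => b _.
by rewrite -(pair_big xpredT xpredT (fun c d => f (h ((a, b), (c, d))))).
Qed.

Lemma sum_if_affine (M : nmodType) (h : F -> M) (a e k : F) :
  a != 0 -> \sum_d (if a * d - e == k then h d else 0) = h ((k + e) / a).
Proof. by move=> a_neq0; apply: sum_if_pred1 => d /=; apply/eqP/eqP => [<- | ->]; field. Qed.

Lemma sum_det_row (M : nmodType) (x : M) (a b k : F) :
  \sum_c \sum_d (if a * d - b * c == k then x else 0) =
  x *+ (if (a == 0) && (b == 0) then ((k == 0%R) * q ^ 2)%N else q).
Proof.
have [a0 | a_neq0] /= := eqVneq a 0; last first.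
  by under eq_bigr do rewrite sum_if_affine //; rewrite sumr_const.
subst a; have [b0 | b_neq0] /= := eqVneq b 0.
  subst b; under eq_bigr do under eq_bigr do rewrite !mul0r subrr eq_sym.
  case: (k == 0) => /=; last by rewrite mul0n mulr0n !big1.
  by rewrite !sumr_const -mulrnA mulnn mul1n.
under eq_bigr do under eq_bigr do rewrite mul0r sub0r.
under eq_bigr do rewrite sumr_const.
rewrite sumrMnl (sum_if_pred1 (i0 := - k / b)) // => c /=.
by apply/eqP/eqP => [<- | ->]; field.
Qed.

Lemma card_det (k : F) :
  (#|[pred A : 'M[F]_2 | \det A == k]| + q = q ^ 3 + (k == 0%R) * q ^ 2)%N.
Proof.
have pairs : (\sum_(ab : F * F | ab != (0%R, 0%R)) q + q = q ^ 3)%N.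
  have <- : (\sum_(ab : F * F) q = q ^ 3)%N.
    by rewrite sum_nat_const card_prod !expnS expn0 muln1 mulnA.
  by rewrite [in RHS](bigD1 (0%R, 0%R)) //= addnC.
rewrite -sum1_card big_mkcond sum_mx22 /=.
under eq_bigr do under eq_bigr do under eq_bigr do under eq_bigr do rewrite inE det_mx22.
under eq_bigr do under eq_bigr do rewrite sum_det_row natn.
rewrite pair_big (bigD1 (0%R, 0%R)) //= !eqxx -addnA addnC.
rewrite (eq_bigr (fun _ => q)) ?pairs // => -[a b].
by rewrite xpair_eqE => /negbTE ->.
Qed.

Lemma card_det_unit (k : F) : k != 0 -> #|[pred A : 'M[F]_2 | \det A == k]| = (q ^ 3 - q)%N.
Proof.
by move=> /negbTE k_neq0; have := card_det k; rewrite k_neq0 mul0n addn0 => <-; rewrite addnK.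
Qed.

Lemma card_singular_neq0 :
  #|[pred A : 'M[F]_2 | (\det A == 0) && (A != 0)]| = (q ^ 3 + q ^ 2 - q - 1)%N.
Proof.
have := card_det 0; rewrite eqxx mul1n (cardD1 0) inE det0 eqxx => <-.
rewrite addnK addKn; apply: eq_card => A; by rewrite !inE andbC.
Qed.

Lemma singular_mx22_row_mul x y z w :
  (x, y) != (0, 0) -> \det (mx22 x y z w) = 0 -> exists t, z = t * x /\ w = t * y.
Proof.
rewrite det_mx22 xpair_eqE negb_and => xy_neq0 /eqP; rewrite subr_eq0 => /eqP det0.
have [x0 | x_neq0] := eqVneq x 0.
  subst x; rewrite eqxx /= in xy_neq0; exists (w / y); split; last by field.
  by rewrite mulr0; apply: (mulfI xy_neq0); rewrite mulr0 -det0 mul0r.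
exists (z / x); split; first by field.
by apply: (mulfI x_neq0); rewrite det0; field.
Qed.

Lemma singular_mx22_reduce (B : 'M[F]_2) : \det B = 0 -> B != 0 ->
  exists g x y, [/\ \det g = 1, (x, y) != (0, 0) & g *m B = mx22 x y 0 0].
Proof.
rewrite [B]mx22_eta; move: (B 0 0) (B 0 1) (B 1 0) (B 1 1) => x y z w det0.
rewrite mx22_eq0 => B_neq0; have [[x0 y0] | xy_neq0] := eqVneq (x, y) (0, 0).
  exists (mx22 0 1 (-1) 0), z, w; split; first by rewrite det_mx22; ring.
    by move: B_neq0; rewrite x0 y0 !eqxx xpair_eqE.
  by rewrite mul_mx22 x0 y0; congr mx22; ring.
have [t [-> ->]] := singular_mx22_row_mul xy_neq0 det0.
exists (mx22 1 0 (- t) 1), x, y; split => //; first by rewrite det_mx22; ring.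
by rewrite mul_mx22; congr mx22; ring.
Qed.

End TwoByTwo.

Section SL2Eigenvalues.
Variables (R : realType) (F : finFieldType).
Local Notation chi := (can_add_char R (F:=F)).
Local Notation q := #|F|.

Definition sl2_eigenvalue (B : 'M[F]_2) : R[i] := \sum_(s | \det s == 1) chi (mxpair B s).

Lemma char_poly_special_unit_adjmx :
  char_poly (special_unit_adjmx R F) = \prod_B ('X - (sl2_eigenvalue B)%:P).
Proof.
have -> : special_unit_adjmx R F = cayley_adjmx _ (fun s : 'M[F]_2 => \det s == 1).
  by apply/matrixP => i j; rewrite !mxE.
apply: (@char_poly_cayley_adjmx _ _ _ (fun B s => chi (mxpair B s))) => [B s1 s2 | B | s | ].
- by rewrite mxpairDr can_add_charD.
- by rewrite mxpair0r can_add_char0.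
- exact: sum_can_add_char_mxpair.
- by rewrite pnatr_eq0 -lt0n; apply/card_gt0P; exists 0.
Qed.

Lemma sl2_eigenvalue_mull g B : \det g = 1 -> sl2_eigenvalue (g *m B) = sl2_eigenvalue B.
Proof.
move=> det_g; rewrite /sl2_eigenvalue; under eq_bigr do rewrite mxpair_mull.
have gT_unit : g^T \in unitmx by rewrite unitmxE det_tr det_g unitr1.
rewrite [RHS](reindex_inj (can_inj (mulKmx gT_unit))) /=.
by apply: eq_bigl => s; rewrite det_mulmx det_tr det_g mul1r.
Qed.

Lemma sl2_eigenvalue0 : sl2_eigenvalue 0 = (q ^ 3 - q)%N%:R.
Proof.
rewrite /sl2_eigenvalue; under eq_bigr do rewrite mxpair0l can_add_char0.
rewrite -(card_det_unit (oner_neq0 F)) -sumr_const.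
by apply: eq_bigl => s; rewrite inE.
Qed.

Lemma sl2_eigenvalue_mx22 B : sl2_eigenvalue B = \sum_a \sum_b \sum_c \sum_d
  (if a * d - b * c == 1 then chi (mxpair B (mx22 a b c d)) else 0).
Proof.
rewrite /sl2_eigenvalue big_mkcond sum_mx22.
by under eq_bigr do under eq_bigr do under eq_bigr do under eq_bigr do rewrite det_mx22.
Qed.

Lemma sl2_eigenvalue_row x y :
  (x, y) != (0, 0) -> sl2_eigenvalue (mx22 x y 0 0) = - q%:R.
Proof.
move=> xy_neq0; rewrite sl2_eigenvalue_mx22.
transitivity (\sum_a \sum_b \sum_c \sum_d
    (if a * d - b * c == 1 then chi (x * a + y * b) else 0)).
  by do 4!(apply: eq_bigr => ? _); rewrite mxpair_mx22 !mul0r !addr0.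
under eq_bigr do under eq_bigr do rewrite sum_det_row oner_eq0 mul0n.
rewrite pair_big (bigD1 (0, 0)) //= eqxx mulr0n add0r.
rewrite (eq_bigr (fun ab => chi (x * ab.1 + y * ab.2) *+ q)) => [|[a b]]; last first.
  by rewrite xpair_eqE => /negbTE ->.
have total : \sum_(ab : F * F) chi (x * ab.1 + y * ab.2) = 0.
  rewrite -(pair_big xpredT xpredT (fun a b => chi (x * a + y * b))) /=.
  under eq_bigr do under eq_bigr do rewrite can_add_charD.
  rewrite -big_distrlr /= !sum_can_add_char_mul.
  move: xy_neq0; rewrite xpair_eqE negb_and.
  by case: eqP; case: eqP => //= _ _ _; rewrite ?mulr0 ?mul0r.
move/eqP: total; rewrite (bigD1 (0, 0)) //= !mulr0 addr0 can_add_char0 addrC addr_eq0.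
by rewrite sumrMnl => /eqP ->; rewrite mulNrn.
Qed.

Lemma sl2_eigenvalue_diag k : k != 0 -> sl2_eigenvalue (mx22 1 0 0 k) = mu_delta R k.
Proof.
move=> k_neq0; rewrite sl2_eigenvalue_mx22 /mu_delta mulr_sumr [RHS]big_mkcond.
apply: eq_bigr => a _; under eq_bigr do under eq_bigr do under eq_bigr do
  rewrite mxpair_mx22 mul1r !mul0r !addr0.
have [-> | a_neq0] /= := eqVneq a 0.
  apply: big1 => b _; apply: big1 => c _.
  under eq_bigr do rewrite mul0r sub0r add0r.
  case: eqP => _; last by rewrite big1.
  by rewrite sum_can_add_char_mul (negbTE k_neq0).
under eq_bigr do under eq_bigr do rewrite sum_if_affine //.
transitivity (\sum_b \sum_c chi (a + k * a^-1) * chi (k * b / a * c)).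
  by do 2!(apply: eq_bigr => ? _); rewrite -can_add_charD; congr chi; field.
under eq_bigr do rewrite -mulr_sumr sum_can_add_char_mul.
rewrite -mulr_sumr mulrC (sum_if_pred1 (i0 := 0)) // => b /=.
by rewrite !mulf_eq0 invr_eq0 (negbTE k_neq0) (negbTE a_neq0) orbF.
Qed.

Lemma sl2_eigenvalue_unit B : \det B != 0 -> sl2_eigenvalue B = mu_delta R (\det B).
Proof.
move=> detB_neq0; pose g := B *m mx22 1 0 0 (\det B)^-1.
have det_g : \det g = 1 by rewrite det_mulmx det_mx22 mul1r !mulr0 subr0 divff.
have g_B : g *m mx22 1 0 0 (\det B) = B.
  by rewrite -mulmxA mul_mx22 !mul1r !mul0r !mulr0 !addr0 !add0r mulVf // mx22_1 mulmx1.
by rewrite -{1}g_B sl2_eigenvalue_mull // sl2_eigenvalue_diag.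
Qed.

Lemma sl2_eigenvalue_singular B : \det B = 0 -> B != 0 -> sl2_eigenvalue B = - q%:R.
Proof.
move=> det0 B_neq0; have [g [x [y [det_g xy_neq0 g_B]]]] := singular_mx22_reduce det0 B_neq0.
by rewrite -(sl2_eigenvalue_mull B det_g) g_B sl2_eigenvalue_row.
Qed.

End SL2Eigenvalues.

Theorem theorem3p12 (R : realType) (F : finFieldType) :
  let q := #|F| in
  char_poly (special_unit_adjmx R F) =
    ('X - ((q ^ 3 - q)%N)%:R%:P) ^+ 1
    * ('X - (- (q%:R : R[i]))%:P) ^+ (q ^ 3 + q ^ 2 - q - 1)
    * \prod_(d : F | d != 0) ('X - (mu_delta R d)%:P) ^+ (q ^ 3 - q).
Proof.
move=> q; rewrite char_poly_special_unit_adjmx.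
rewrite (partition_big (fun B : 'M[F]_2 => \det B) xpredT) //= (bigD1 0) //=.
congr (_ * _).
  rewrite (bigD1 0) ?det0 //= sl2_eigenvalue0 expr1; congr (_ * _).
  rewrite (eq_bigr (fun _ => 'X - (- (q%:R : R[i]))%:P)) => [|B /andP[/eqP det0 B_neq0]].
    by rewrite -card_singular_neq0 -prodr_const.
  by rewrite sl2_eigenvalue_singular.
apply: eq_bigr => d d_neq0; rewrite -(card_det_unit d_neq0) -prodr_const.
apply: eq_big => [B | B /eqP detB]; first by rewrite inE.
by rewrite -detB in d_neq0 *; rewrite sl2_eigenvalue_unit.
Qed.
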